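(* Let $H\ge1$, $V$ a finite node set and $r\in V$. Let $\mathcal{A}$ and $\mathcal{P}$ be the hop-constrained tree polytopes defined in the context, and let $\mathcal{A}_X=\{x:\exists y,\ (x,y)\in\mathcal{A}\}$ and $\mathcal{P}_X=\{x:\exists l,g,\ (x,l,g)\in\mathcal{P}\}$ be their projections onto the $x$-variable space. Then $\mathcal{P}_X\subseteq\mathcal{A}_X$.
   Context: Setting: $V$ is the node set of a complete undirected graph, $r\in V$ a root, $H$ the hop limit. For every ordered pair $(u,v)$ of distinct nodes there is a real variable $x_{u,v}$. Common constraints: (X1) $\sum_{u\in V\setminus\{v\}}x_{u,v}\le 1$ for all $v\in V$; (X2) $\sum_{u\in V\setminus\{v,w\}}x_{u,v}\ge x_{v,w}$ for all $v\in V\setminus\{r\}$, $w\in V\setminus\{v\}$; (X3) $0\le x_{u,v}\le 1$ for all arcs. Partial-ordering polytope $\mathcal{P}$: variables $x$ and $l_{v,i},g_{i,v}$ for $v\in V$, $i\in\{0,\dots,H\}$, satisfying (X1)–(X3) and: $l_{r,0}=g_{0,r}=0$; $l_{v,1}=g_{H,v}=0$ for $v\neq r$; $l_{v,i}-l_{v,i+1}\le0$ for $v\in V$, $i=0,\dots,H-1$; $g_{i,v}+l_{v,i+1}=1$ for $v\in V$, $i=0,\dots,H-1$; $l_{u,i}+g_{i,v}\ge x_{u,v}$ for $u\in V$, $v\neq u$, $i=0,\dots,H$; $0\le l_{v,i},g_{i,v}\le1$. Assignment polytope $\mathcal{A}$: variables $x$ and $y_{v,i}$ for $v\in V$, $i\in\{0,\dots,H\}$,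 satisfying (X1)–(X3) and: $y_{r,0}=1$; $y_{r,i}=0$ for $i=1,\dots,H$; $y_{v,0}=0$ for $v\neq r$; $\sum_{i=1}^H y_{v,i}=1$ for $v\neq r$; $y_{u,i}-y_{v,i+1}+x_{u,v}\le1$ for $u\in V$, $v\neq u$, $i=0,\dots,H-1$; $y_{u,H}+x_{u,v}\le 1$ for $u\in V$, $v\neq u$; $0\le y_{v,i}\le 1$. *)

From mathcomp Require Import all_boot all_order all_algebra.
From mathcomp Require Import reals.
Set Implicit Arguments. Unset Strict Implicit. Unset Printing Implicit Defensive.
Import Order.TTheory GRing.Theory Num.Theory.
Local Open Scope ring_scope.

(* Arc variables x u v (only meaningful for u != v); hop indices are nats,
   constraints only quantify over indices 0..H. *)
Section HopTree.
Variables (R : realType) (V : finType) (r : V) (H : nat).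

Definition X_constraints (x : V -> V -> R) : Prop :=
  (forall v : V, \sum_(u | u != v) x u v <= 1) /\
  (forall v w : V, v != r -> w != v ->
     x v w <= \sum_(u | (u != v) && (u != w)) x u v) /\
  (forall u v : V, u != v -> 0 <= x u v <= 1).

Definition in_P (x : V -> V -> R) (l : V -> nat -> R) (g : nat -> V -> R)
  : Prop :=
  X_constraints x /\
  l r 0%N = 0 /\ g 0%N r = 0 /\
  (forall v : V, v != r -> l v 1%N = 0 /\ g H v = 0) /\
  (forall (v : V) (i : nat), (i < H)%N -> l v i - l v i.+1 <= 0) /\
  (forall (v : V) (i : nat), (i < H)%N -> g i v + l v i.+1 = 1) /\
  (forall (u v : V) (i : nat), u != v -> (i <= H)%N -> x u v <= l u i + g i v) /\
  (forall (v : V) (i : nat), (i <= H)%N ->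
     0 <= l v i <= 1 /\ 0 <= g i v <= 1).

Definition in_A (x : V -> V -> R) (y : V -> nat -> R) : Prop :=
  X_constraints x /\
  y r 0%N = 1 /\
  (forall i : nat, (1 <= i <= H)%N -> y r i = 0) /\
  (forall v : V, v != r -> y v 0%N = 0) /\
  (forall v : V, v != r -> \sum_(1 <= i < H.+1) y v i = 1) /\
  (forall (u v : V) (i : nat), u != v -> (i < H)%N ->
     y u i - y v i.+1 + x u v <= 1) /\
  (forall u v : V, u != v -> y u H + x u v <= 1) /\
  (forall (v : V) (i : nat), (i <= H)%N -> 0 <= y v i <= 1).

Definition in_PX (x : V -> V -> R) : Prop := exists l g, in_P x l g.
Definition in_AX (x : V -> V -> R) : Prop := exists y, in_A x y.

End HopTree.

From mathcomp Require Import all_boot all_order all_algebra.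
From mathcomp Require Import reals.
From mathcomp Require Import lra zify.
Set Implicit Arguments. Unset Strict Implicit. Unset Printing Implicit Defensive.
Import Order.TTheory GRing.Theory Num.Theory.
Local Open Scope ring_scope.

(* Read [1 - x u v] as the cost of the arc uv.  In A, the mass y_{v,i+1} must be
   at least y_{u,i} - cost(u,v) for every u, and y_{u,H} at most every cost(u,v).
   Let B_k(v) be the least cost of a walk with H - k + 1 arcs leaving v, capped
   at 1.  Since B_k(u) <= B_{k+1}(v) + cost(u,v) and B_H(u) <= cost(u,v), masses
   with y_{v,k} <= B_k(v) satisfy the upper constraint and can never be forced
   above the bound.  We fill the levels greedily: level k+1 receives the mass
   forced by level k, raised just enough that B_{k+2} + ... + B_H can still
   complete the total mass to 1.  The total never exceeds 1, because the masses
   forced at v over all levels add up to at most \sum_u x_{uv} <= 1 (X1).  The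
   bounds y_{v,k} <= B_k(v) survive the raising because B_1(v) >= 1 for v <> r,
   so the whole unit mass of v would fit on level 1: the ordering variables of P
   give B_k(v) >= 1 - l_{v,k}, and l_{v,1} = 0. *)

Lemma sum_pos_part_le (R : realDomainType) (I : Type) (s : seq I) (a : I -> R) c :
  0 <= c -> (forall i, 0 <= a i) ->
  \sum_(i <- s) Num.max (a i - c) 0 <= Num.max (\sum_(i <- s) a i - c) 0.
Proof.
move=> c_ge0 a_ge0; elim: s => [|i s IHs]; first by rewrite !big_nil le_max lexx orbT.
have S_ge0 : 0 <= \sum_(j <- s) a j by apply: sumr_ge0.
rewrite !big_cons; move: IHs S_ge0 (a_ge0 i).
move: (\sum_(j <- s) a j) (\sum_(j <- s) Num.max (a j - c) 0) => S T IHs S_ge0 ai_ge0.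
have T_le : T <= S by apply: le_trans IHs _; rewrite ge_max S_ge0 andbT; lra.
have [ai_le|ai_gt] := lerP (a i - c) 0.
  rewrite add0r (le_trans IHs) // ge_max !le_max lexx orbT andbT.
  by apply/orP; left; lra.
by rewrite le_max; apply/orP; left; lra.
Qed.

Lemma X_constraints_ge0 (R : realType) (V : finType) (r : V) (x : V -> V -> R) :
  X_constraints r x -> forall u v, u != v -> 0 <= x u v.
Proof. by case=> [_ [_ x01]] u v /x01/andP[]. Qed.

Lemma X_constraints_le1 (R : realType) (V : finType) (r : V) (x : V -> V -> R) :
  X_constraints r x -> forall u v, u != v -> x u v <= 1.
Proof. by case=> [_ [_ x01]] u v /x01/andP[]. Qed.

Section WalkBounds.
Variables (R : realType) (V : finType) (x : V -> V -> R).

Definition arc_cost (u v : V) : R := 1 - x u v.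

Fixpoint walk_bound (d : nat) (v : V) : R :=
  match d with
  | 0 => \big[Num.min/1]_(w | w != v) arc_cost v w
  | d'.+1 => \big[Num.min/1]_(w | w != v) (walk_bound d' w + arc_cost v w)
  end.

Variable H : nat.

Definition level_bound (k : nat) (v : V) : R := walk_bound (H - k) v.

Definition tail_bound (k : nat) (v : V) : R :=
  \sum_(k.+1 <= j < H.+1) level_bound j v.

Definition forced_mass (Y : V -> R) (v : V) : R :=
  \big[Num.max/0]_(u | u != v) (Y u - arc_cost u v).

Lemma level_bound_le1 k v : level_bound k v <= 1.
Proof. by rewrite /level_bound; case: (H - k)%N => [|d]; apply: bigmin_le_id. Qed.

Lemma level_bound_step k u w :
  (k < H)%N -> w != u -> level_bound k u <= level_bound k.+1 w + arc_cost u w.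
Proof.
move=> ltkH neq_wu; rewrite /level_bound (_ : (H - k = (H - k.+1).+1)%N); last by lia.
exact: (bigmin_le_cond _ (fun w => walk_bound _ w + arc_cost u w)).
Qed.

Lemma level_bound_last v w : w != v -> level_bound H v <= arc_cost v w.
Proof. by move=> neq_wv; rewrite /level_bound subnn; apply: bigmin_le_cond. Qed.

Lemma tail_boundS k v :
  (k < H)%N -> tail_bound k v = level_bound k.+1 v + tail_bound k.+1 v.
Proof. by move=> ltkH; rewrite /tail_bound big_ltn. Qed.

Lemma tail_bound_last v : tail_bound H v = 0.
Proof. by rewrite /tail_bound big_geq. Qed.

Hypothesis x_le1 : forall u v, u != v -> x u v <= 1.

Lemma arc_cost_ge0 u v : u != v -> 0 <= arc_cost u v.
Proof. by move=> neq_uv; rewrite subr_ge0 x_le1. Qed.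

Lemma walk_bound_ge0 d v : 0 <= walk_bound d v.
Proof.
elim: d v => [|d IHd] v /=; apply: le_bigmin => // w neq_wv.
  by rewrite arc_cost_ge0 // eq_sym.
by rewrite addr_ge0 ?arc_cost_ge0 // eq_sym.
Qed.

Lemma tail_bound_ge0 k v : 0 <= tail_bound k v.
Proof. by apply: sumr_ge0 => j _; apply: walk_bound_ge0. Qed.

Hypothesis x_ge0 : forall u v, u != v -> 0 <= x u v.

(* Each unit of mass sitting at [u], wherever it sits among the levels, forces at
   most [x u v] at [v]. *)
Lemma sum_forced_mass_le n (Y : nat -> V -> R) v :
  (forall j u, 0 <= Y j u) -> (forall u, \sum_(j < n) Y j u <= 1) ->
  \sum_(j < n) forced_mass (Y j) v <= \sum_(u | u != v) x u v.
Proof.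
move=> Y_ge0 Y_sum_le1; pose pos j u := Num.max (Y j u - arc_cost u v) 0.
have pos_ge0 j u : 0 <= pos j u by rewrite le_max lexx orbT.
apply: (@le_trans _ _ (\sum_(j < n) \sum_(u | u != v) pos j u)).
  apply: ler_sum => j _; apply: bigmax_le => [|u neq_uv].
    by apply: sumr_ge0.
  rewrite (bigD1 u) //= -[X in X <= _]addr0 lerD ?sumr_ge0 //.
  by rewrite le_max lexx.
rewrite exchange_big /=; apply: ler_sum => u neq_uv.
have := sum_pos_part_le (index_enum 'I_n) (arc_cost_ge0 neq_uv) (fun j => Y_ge0 j u).
move/le_trans; apply; have := Y_sum_le1 u; have := x_ge0 neq_uv.
by rewrite ge_max /arc_cost => ? ?; apply/andP; split; lra.
Qed.

End WalkBounds.

Section GreedyAssignment.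
Variables (R : realType) (V : finType) (r : V) (H : nat) (x : V -> V -> R).

(* The pair (mass of v on levels 1..k, mass of v on level k); the root only
   carries its unit mass on level 0. *)
Fixpoint greedy (k : nat) : (V -> R) * (V -> R) :=
  match k with
  | 0 => (fun _ => 0, fun v => if v == r then 1 else 0)
  | k'.+1 =>
      let: (cum, mass) := greedy k' in
      let cum' v := if v == r then 0
                    else Num.max (cum v + forced_mass x mass v) (1 - tail_bound x H k v) in
      (cum', fun v => if v == r then 0 else cum' v - cum v)
  end.

Definition cum_mass k v := (greedy k).1 v.
Definition depth_mass k v := (greedy k).2 v.

Lemma cum_mass0 v : cum_mass 0 v = 0. Proof. by []. Qed.

Lemma depth_mass0 v : depth_mass 0 v = if v == r then 1 else 0.
Proof. by []. Qed.

Lemma cum_massS k v : v != r ->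
  cum_mass k.+1 v =
  Num.max (cum_mass k v + forced_mass x (depth_mass k) v) (1 - tail_bound x H k.+1 v).
Proof. by rewrite /cum_mass /depth_mass /=; case: (greedy k) => ? ? /= /negbTE ->. Qed.

Lemma depth_massS k v : v != r -> depth_mass k.+1 v = cum_mass k.+1 v - cum_mass k v.
Proof.
by rewrite /cum_mass /depth_mass /=; case: (greedy k) => ? ? /= /negbTE ->.
Qed.

Lemma depth_mass_root k : (0 < k)%N -> depth_mass k r = 0.
Proof.
by case: k => // k; rewrite /depth_mass /=; case: (greedy k) => ? ? /=; rewrite eqxx.
Qed.

Hypothesis x_in_X : X_constraints r x.
Hypothesis H_gt0 : (0 < H)%N.
Hypothesis no_arc_into_root : forall u, u != r -> x u r <= 0.
Hypothesis level_bound1 : forall v, v != r -> 1 <= level_bound x H 1 v.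

Let x_ge0 := X_constraints_ge0 x_in_X.
Let x_le1 := X_constraints_le1 x_in_X.

Lemma forced_mass_le_depth_massS k v :
  v != r -> forced_mass x (depth_mass k) v <= depth_mass k.+1 v.
Proof. by move=> neq_vr; rewrite depth_massS // cum_massS // lerBrDl le_max lexx. Qed.

Lemma depth_mass_ge0 k v : 0 <= depth_mass k v.
Proof.
case: k => [|k]; first by rewrite depth_mass0; case: eqP.
have [->|neq_vr] := eqVneq v r; first by rewrite depth_mass_root //.
exact: le_trans (bigmax_ge_id _ _ _ _) (forced_mass_le_depth_massS k neq_vr).
Qed.

Lemma sum_depth_mass k v : v != r -> \sum_(i < k.+1) depth_mass i v = cum_mass k v.
Proof.
move=> neq_vr; elim: k => [|k IHk]; first by rewrite big_ord1 depth_mass0 (negbTE neq_vr).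
by rewrite big_ord_recr /= IHk depth_massS // addrC subrK.
Qed.

Lemma sum_depth_mass_root k : \sum_(i < k.+1) depth_mass i r = 1.
Proof.
elim: k => [|k IHk]; first by rewrite big_ord1 depth_mass0 eqxx.
by rewrite big_ord_recr /= IHk depth_mass_root // addr0.
Qed.

Lemma cum_mass_ge k v : v != r -> 1 - tail_bound x H k v <= cum_mass k v.
Proof.
move=> neq_vr; case: k => [|k]; last by rewrite cum_massS // le_max lexx orbT.
rewrite cum_mass0 tail_boundS // subr_le0.
by rewrite -[1]addr0 lerD ?level_bound1 ?tail_bound_ge0.
Qed.

Lemma forced_mass_le_level_bound k v : (k < H)%N ->
  ((0 < k)%N -> forall u, u != r -> depth_mass k u <= level_bound x H k u) ->
  v != r -> forced_mass x (depth_mass k) v <= level_bound x H k.+1 v.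
Proof.
move=> ltkH depth_le neq_vr; apply: bigmax_le => [|u neq_uv].
  exact: walk_bound_ge0.
have B_ge0 := walk_bound_ge0 x_le1.
case: (eqVneq u r) neq_uv => [-> | neq_ur] neq_uv;
  have cost_ge0 := arc_cost_ge0 x_le1 neq_uv; case: k => [|k] in ltkH depth_le *.
- have := x_le1 neq_uv; have := level_bound1 neq_vr.
  by rewrite depth_mass0 eqxx /arc_cost; lra.
- by rewrite depth_mass_root // sub0r (le_trans _ (B_ge0 _ _)) ?oppr_le0.
- by rewrite depth_mass0 (negbTE neq_ur) sub0r (le_trans _ (B_ge0 _ _)) ?oppr_le0.
- rewrite lerBlDr (le_trans (depth_le isT u neq_ur)) //.
  by apply: level_bound_step; rewrite // eq_sym.
Qed.

Lemma depth_mass_le_level_bound k v :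
  (0 < k <= H)%N -> v != r -> depth_mass k v <= level_bound x H k v.
Proof.
elim: k v => // k IHk v /andP[_ ltkH] neq_vr.
have forced_le : forced_mass x (depth_mass k) v <= level_bound x H k.+1 v.
  apply: forced_mass_le_level_bound => // k_gt0 u neq_ur.
  by apply: IHk; rewrite // k_gt0 ltnW.
have cum_ge := cum_mass_ge k neq_vr; have tail_eq := tail_boundS x v ltkH.
rewrite depth_massS // cum_massS // lerBlDr ge_max.
by apply/andP; split; lra.
Qed.

Lemma depth_mass_le1 k v : (k <= H)%N -> depth_mass k v <= 1.
Proof.
case: k => [|k] leSkH; first by rewrite depth_mass0; case: eqP.
have [->|neq_vr] := eqVneq v r; first by rewrite depth_mass_root //.
exact: le_trans (depth_mass_le_level_bound _ neq_vr) (level_bound_le1 _ _ _ _).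
Qed.

Lemma cum_mass_le k v : (k <= H)%N -> v != r ->
  cum_mass k v <=
  Num.max (\sum_(j < k) forced_mass x (depth_mass j) v) (1 - tail_bound x H k v).
Proof.
elim: k => [|k IHk] leSkH neq_vr.
  by rewrite cum_mass0 big_ord0 le_max lexx.
have forced_le : forced_mass x (depth_mass k) v <= level_bound x H k.+1 v.
  apply: forced_mass_le_level_bound => // k_gt0 u neq_ur.
  by apply: depth_mass_le_level_bound; rewrite // k_gt0 ltnW.
have := tail_boundS x v leSkH; have := IHk (ltnW leSkH) neq_vr.
rewrite cum_massS // big_ord_recr /= => cum_le tail_eq.
rewrite ge_max [X in _ && X]le_max lexx orbT andbT le_max.
by move: cum_le; rewrite le_max => /orP[] ?; apply/orP; [left | right]; lra.
Qed.

Lemma sum_forced_mass_le1 k v :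
  (k <= H)%N -> \sum_(j < k) forced_mass x (depth_mass j) v <= 1.
Proof.
elim: k v => [|k IHk] v leSkH; first by rewrite big_ord0 ler01.
have [in_deg_le1 _] := x_in_X; apply: le_trans (in_deg_le1 v).
apply: (sum_forced_mass_le x_le1 x_ge0 v depth_mass_ge0) => u.
have [->|neq_ur] := eqVneq u r; first by rewrite sum_depth_mass_root.
rewrite sum_depth_mass // (le_trans (cum_mass_le (ltnW leSkH) neq_ur)) // ge_max.
by rewrite IHk ?(ltnW leSkH) // gerBl tail_bound_ge0.
Qed.

Lemma cum_mass_le1 k v : (k <= H)%N -> v != r -> cum_mass k v <= 1.
Proof.
move=> leKH neq_vr; rewrite (le_trans (cum_mass_le leKH neq_vr)) // ge_max.
by rewrite sum_forced_mass_le1 // gerBl tail_bound_ge0.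
Qed.

Lemma greedy_in_A : in_A r H x (fun v i => depth_mass i v).
Proof.
split=> //; split; first by rewrite depth_mass0 eqxx.
split; first by case=> [|i] // _; rewrite depth_mass_root.
split; first by move=> v neq_vr; rewrite depth_mass0 (negbTE neq_vr).
split.
  move=> v neq_vr; apply/eqP; rewrite eq_le.
  have := @big_ltn _ 0 +%R 0 H.+1 (fun i => depth_mass i v) (ltn0Sn H).
  rewrite big_mkord sum_depth_mass // depth_mass0 (negbTE neq_vr) add0r => <-.
  rewrite cum_mass_le1 //=; have := cum_mass_ge H neq_vr.
  by rewrite tail_bound_last subr0.
split.
  move=> u v i + ltiH; case: (eqVneq v r) => [-> | neq_vr] neq_uv.
    rewrite depth_mass_root // subr0; have := depth_mass_le1 u (ltnW ltiH).
    by have := no_arc_into_root neq_uv; lra.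
  have forced_ge : depth_mass i u - arc_cost x u v <= forced_mass x (depth_mass i) v.
    exact: le_bigmax_cond.
  by have := forced_mass_le_depth_massS i neq_vr; rewrite /arc_cost in forced_ge; lra.
split.
  move=> u v neq_uv; have [eq_ur | neq_ur] := eqVneq u r.
    by rewrite eq_ur depth_mass_root // add0r x_le1 // -eq_ur.
  have mass_le : depth_mass H u <= level_bound x H H u.
    by apply: depth_mass_le_level_bound; rewrite ?H_gt0 ?leqnn.
  have bound_le : level_bound x H H u <= arc_cost x u v.
    by apply: level_bound_last; rewrite eq_sym.
  by rewrite /arc_cost in bound_le; lra.
by move=> v i leiH; rewrite depth_mass_ge0 depth_mass_le1.
Qed.

End GreedyAssignment.

Section PartialOrdering.
Variables (R : realType) (V : finType) (r : V) (H : nat) (x : V -> V -> R).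
Variables (l : V -> nat -> R) (g : nat -> V -> R).
Hypothesis x_in_P : in_P r H x l g.
Hypothesis H_gt0 : (0 < H)%N.

Lemma in_P_no_arc_into_root u : u != r -> x u r <= 0.
Proof.
have [_ [_ [g0r [l1 [l_mono [_ [arc_le _]]]]]]] := x_in_P.
move=> neq_ur; have [l_u1 _] := l1 u neq_ur.
have := arc_le u r 0%N neq_ur (leq0n H); have := l_mono u 0%N H_gt0.
by rewrite g0r l_u1; lra.
Qed.

Let x_le1 := X_constraints_le1 x_in_P.1.

Let l_ge0 v i : (i <= H)%N -> 0 <= l v i.
Proof. by have [_ [_ [_ [_ [_ [_ [_ lg01]]]]]]] := x_in_P; case/(lg01 v)=> /andP[]. Qed.

Let arc_le_last v w : v != w -> w != r -> x v w <= l v H.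
Proof.
have [_ [_ [_ [l1g [_ [_ [arc_le _]]]]]]] := x_in_P.
by move=> neq_vw /l1g[_ gH]; have := arc_le v w H neq_vw (leqnn H); rewrite gH addr0.
Qed.

Let arc_le_step v w k : v != w -> (k < H)%N -> x v w <= l v k + 1 - l w k.+1.
Proof.
have [_ [_ [_ [_ [_ [gl1 [arc_le _]]]]]]] := x_in_P.
move=> neq_vw ltkH; have := arc_le v w k neq_vw (ltnW ltkH).
by rewrite -(gl1 w k ltkH) addrA addrK.
Qed.

Lemma in_P_walk_bound d v :
  v != r -> (d <= H)%N -> 1 - l v (H - d) <= walk_bound x d v.
Proof.
elim: d v => [|d IHd] v neq_vr ledH /=.
  rewrite subn0; apply: le_bigmin => [|w neq_wv]; first by rewrite gerBl l_ge0.
  have := l_ge0 v (leqnn H); rewrite /arc_cost.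
  have [-> | neq_wr] := eqVneq w r; first by have := in_P_no_arc_into_root neq_vr; lra.
  by have := arc_le_last (v := v) (w := w); rewrite eq_sym neq_wv neq_wr; lra.
apply: le_bigmin => [|w neq_wv]; first by rewrite gerBl l_ge0 ?leq_subr.
have [-> | neq_wr] := eqVneq w r.
  have := walk_bound_ge0 x_le1 d r; have := in_P_no_arc_into_root neq_vr.
  by have := l_ge0 v (leq_subr d.+1 H); rewrite /arc_cost; lra.
have := IHd w neq_wr (ltnW ledH); rewrite /arc_cost.
have := arc_le_step (k := (H - d.+1)%N) (w := w) (v := v).
rewrite eq_sym neq_wv (_ : (H - d.+1 < H)%N); last by lia.
by rewrite (_ : (H - d.+1).+1 = H - d)%N; [lra | lia].
Qed.

Lemma in_P_level_bound1 v : v != r -> 1 <= level_bound x H 1 v.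
Proof.
have [_ [_ [_ [l1 _]]]] := x_in_P.
move=> neq_vr; have := in_P_walk_bound neq_vr (leq_subr 1 H).
by rewrite subKn // (l1 v neq_vr).1 subr0.
Qed.

End PartialOrdering.

Theorem theorem2 (R : realType) (V : finType) (r : V) (H : nat) :
  (1 <= H)%N ->
  forall x : V -> V -> R, in_PX r H x -> in_AX r H x.
Proof.
move=> H_gt0 x [l [g x_in_P]]; exists (fun v i => depth_mass r H x i v).
exact: (greedy_in_A x_in_P.1 H_gt0 (in_P_no_arc_into_root x_in_P H_gt0)
                   (in_P_level_bound1 x_in_P H_gt0)).
Qed.
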